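(* Let $\ell\ge1$, let $R\subset\mathbb N$ be a set of $\ell$-recurrence, $(X,T)$ a minimal system and $U\subset X$ a nonempty open set. Then $R\cap N^\ell(U)$ is a set of $\ell$-recurrence, where $N^\ell(U)=\{n\in\mathbb N: U\cap T^{-n}U\cap\dots\cap T^{-\ell n}U\ne\emptyset\}$.
   Context: A system is a compact metric space with a homeomorphism; minimal means no proper nonempty closed invariant subset. $R$ is a set of $\ell$-recurrence if for every minimal system $(Y,S)$ and nonempty open $V\subset Y$ there exists $n\in R$ with $V\cap S^{-n}V\cap\dots\cap S^{-\ell n}V\ne\emptyset$. *)

From Stdlib Require Import Reals List.
Open Scope R_scope.

Definition is_metric {X : Type} (d : X -> X -> R) : Prop :=
  (forall x y, 0 <= d x y) /\
  (forall x y, d x y = 0 <-> x = y) /\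
  (forall x y, d x y = d y x) /\
  (forall x y z, d x z <= d x y + d y z).

Definition is_open {X : Type} (d : X -> X -> R) (U : X -> Prop) : Prop :=
  forall x, U x -> exists eps, 0 < eps /\ forall y, d x y < eps -> U y.

Definition is_closed {X : Type} (d : X -> X -> R) (A : X -> Prop) : Prop :=
  is_open d (fun x => ~ A x).

Definition is_compact {X : Type} (d : X -> X -> R) : Prop :=
  forall (I : Type) (C : I -> X -> Prop),
    (forall i, is_open d (C i)) ->
    (forall x, exists i, C i x) ->
    exists l : list I, forall x, exists i, In i l /\ C i x.

Definition is_continuous {X : Type} (d : X -> X -> R) (f : X -> X) : Prop :=
  forall x eps, 0 < eps ->
    exists delta, 0 < delta /\ forall y, d x y < delta -> d (f x) (f y) < eps.

Definition is_homeomorphism {X : Type} (d : X -> X -> R) (T : X -> X) : Prop :=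
  is_continuous d T /\
  exists Tinv : X -> X, is_continuous d Tinv /\
    (forall x, Tinv (T x) = x) /\ (forall x, T (Tinv x) = x).

Definition is_system {X : Type} (d : X -> X -> R) (T : X -> X) : Prop :=
  is_metric d /\ is_compact d /\ is_homeomorphism d T.

(* A is invariant: T A = A, i.e. x in A iff T x in A (T bijective) *)
Definition is_invariant {X : Type} (T : X -> X) (A : X -> Prop) : Prop :=
  forall x, A x <-> A (T x).

Definition is_minimal {X : Type} (d : X -> X -> R) (T : X -> X) : Prop :=
  forall A : X -> Prop, is_closed d A -> is_invariant T A ->
    (exists x, A x) -> forall x, A x.

Definition multiple_return {X : Type} (T : X -> X) (l n : nat) (U : X -> Prop) : Prop :=
  exists x, forall j, (j <= l)%nat -> U (Nat.iter (j * n) T x).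

Definition return_set {X : Type} (T : X -> X) (l : nat) (U : X -> Prop) : nat -> Prop :=
  fun n => multiple_return T l n U.

(* R is a set of ℓ-recurrence; ℕ = {1,2,...}, so only positive n ∈ R count *)
Definition recurrence_set (l : nat) (Rs : nat -> Prop) : Prop :=
  forall (Y : Type) (dY : Y -> Y -> R) (S : Y -> Y),
    is_system dY S -> is_minimal dY S ->
    forall V : Y -> Prop, is_open dY V -> (exists y, V y) ->
      exists n, (0 < n)%nat /\ Rs n /\ multiple_return S l n V.

From Stdlib Require Import Reals List Lia Lra Cantor.
From Stdlib Require Import Classical ProofIrrelevance IndefiniteDescription.
Open Scope R_scope.

(* Let (Y, S) be minimal and V ⊆ Y open and nonempty. Take a minimal subset M
   of the product system (X × Y, T × S). Its two coordinate projections are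
   invariant, so by minimality of X and Y they meet U and V; minimality of M
   then gives a point (x, y) ∈ M with x ∈ U and S^k y ∈ V for some k ∈ ℤ.
   Applying the ℓ-recurrence of R to the minimal system M and its open set
   {(x', y') : x' ∈ U, S^k y' ∈ V} yields n ∈ R and a point whose first
   coordinate witnesses n ∈ N^ℓ(U) and whose second coordinate, moved by S^k,
   witnesses the ℓ-fold return of n to V.
   Minimal subsets are built without Zorn's lemma: enumerate a countable base
   of balls, successively remove the invariant open set generated by each ball
   whenever something survives, and intersect by compactness. *)

Lemma iter_semiconj {A B : Type} (f : A -> A) (g : B -> B) (pi : A -> B) :
  (forall x, pi (f x) = g (pi x)) ->
  forall n x, pi (Nat.iter n f x) = Nat.iter n g (pi x).
Proof.
  intros Hfg n; induction n as [|n IH]; intro x; simpl; [reflexivity|].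
  rewrite Hfg, IH; reflexivity.
Qed.

Lemma list_min_pos {A : Type} (f : A -> R) (L : list A) :
  (forall a, 0 < f a) -> exists delta, 0 < delta /\ forall a, In a L -> delta <= f a.
Proof.
  intro Hf; induction L as [|a L [delta [Hdelta HL]]].
  - exists 1; split; [lra | intros a []].
  - exists (Rmin (f a) delta); split; [now apply Rmin_pos|].
    intros b [<-|Hb]; [apply Rmin_l|].
    pose proof (Rmin_r (f a) delta); pose proof (HL b Hb); lra.
Qed.

Section Topology.
Context {X : Type} (d : X -> X -> R).

Lemma is_open_ext (A B : X -> Prop) :
  (forall x, A x <-> B x) -> is_open d A -> is_open d B.
Proof.
  intros HAB HA x Bx. destruct (HA x (proj2 (HAB x) Bx)) as [e [He Hball]].
  exists e; split; [exact He|]. intros y Hy; apply HAB, Hball, Hy.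
Qed.

Lemma is_closed_ext (A B : X -> Prop) :
  (forall x, A x <-> B x) -> is_closed d A -> is_closed d B.
Proof.
  intro HAB; apply is_open_ext. intro x; specialize (HAB x); tauto.
Qed.

Lemma is_open_and (A B : X -> Prop) :
  is_open d A -> is_open d B -> is_open d (fun x => A x /\ B x).
Proof.
  intros HA HB x [Ax Bx].
  destruct (HA x Ax) as [e1 [He1 HA1]], (HB x Bx) as [e2 [He2 HB2]].
  exists (Rmin e1 e2); split; [now apply Rmin_pos|].
  intros y Hy; pose proof (Rmin_l e1 e2); pose proof (Rmin_r e1 e2).
  split; [apply HA1 | apply HB2]; lra.
Qed.

Lemma is_closed_and (A B : X -> Prop) :
  is_closed d A -> is_closed d B -> is_closed d (fun x => A x /\ B x).
Proof.
  intros HA HB x HAB.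
  destruct (not_and_or _ _ HAB) as [Ax|Bx];
    [destruct (HA x Ax) as [e [He Hball]] | destruct (HB x Bx) as [e [He Hball]]];
    exists e; split; try exact He; intros y Hy [Ay By]; exact (Hball y Hy ltac:(assumption)).
Qed.

Lemma is_closed_compl (A : X -> Prop) : is_open d A -> is_closed d (fun x => ~ A x).
Proof.
  apply is_open_ext. intro x; split; [intros Ax nAx; exact (nAx Ax) | apply NNPP].
Qed.

Lemma is_open_preimage (f : X -> X) (B : X -> Prop) :
  is_continuous d f -> is_open d B -> is_open d (fun x => B (f x)).
Proof.
  intros Hf HB x Bfx. destruct (HB _ Bfx) as [e [He Hball]].
  destruct (Hf x e He) as [delta [Hdelta Hcont]].
  exists delta; split; [exact Hdelta|]. intros y Hy; exact (Hball _ (Hcont y Hy)).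
Qed.

Lemma continuous_comp (f g : X -> X) :
  is_continuous d f -> is_continuous d g -> is_continuous d (fun x => f (g x)).
Proof.
  intros Hf Hg x e He. destruct (Hf (g x) e He) as [e1 [He1 Hf1]].
  destruct (Hg x e1 He1) as [e2 [He2 Hg2]].
  exists e2; split; [exact He2|]. intros y Hy; exact (Hf1 _ (Hg2 y Hy)).
Qed.

Lemma continuous_iter (f : X -> X) n :
  is_continuous d f -> is_continuous d (Nat.iter n f).
Proof.
  intro Hf; induction n as [|n IH]; simpl.
  - intros x e He; exists e; split; [exact He | intros y Hy; exact Hy].
  - exact (continuous_comp f (Nat.iter n f) Hf IH).
Qed.

Lemma compact_nested_inter (K : nat -> X -> Prop) :
  is_compact d -> (forall m, is_closed d (K m)) ->
  (forall m m' z, (m <= m')%nat -> K m' z -> K m z) ->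
  (forall m, exists z, K m z) -> exists z, forall m, K m z.
Proof.
  intros Hc HKc Hanti Hne. apply NNPP; intro Hempty.
  destruct (Hc nat (fun m z => ~ K m z) HKc) as [L HL].
  - intro x. apply not_all_not_ex; intro Hx.
    apply Hempty; exists x; intro m; apply NNPP, Hx.
  - destruct (Hne (list_max L)) as [z Hz]. destruct (HL z) as [m [Hm nKz]].
    apply nKz, (Hanti m (list_max L)); [|exact Hz].
    exact (proj1 (Forall_forall _ L) (proj1 (list_max_le L _) (le_n _)) m Hm).
Qed.

End Topology.

Section Metric.
Context {X : Type} (d : X -> X -> R).
Hypothesis Hd : is_metric d.

Lemma metric_nonneg x y : 0 <= d x y.
Proof. destruct Hd as (H & _); apply H. Qed.

Lemma metric_refl x : d x x = 0.
Proof. destruct Hd as (_ & H & _); apply H; reflexivity. Qed.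

Lemma metric_sym x y : d x y = d y x.
Proof. destruct Hd as (_ & _ & H & _); apply H. Qed.

Lemma metric_triangle x y z : d x z <= d x y + d y z.
Proof. destruct Hd as (_ & _ & _ & H); apply H. Qed.

Lemma is_open_ball c r : is_open d (fun y => d c y < r).
Proof.
  intros y Hy. exists (r - d c y); split; [lra|].
  intros z Hz; pose proof (metric_triangle c y z); lra.
Qed.

Lemma compact_finite_net (r : X -> R) :
  is_compact d -> (forall x, 0 < r x) ->
  exists L : list X, forall y, exists x, In x L /\ d x y < r x.
Proof.
  intros Hc Hr. apply (Hc X (fun x y => d x y < r x)); [intro; apply is_open_ball|].
  intro y; exists y; rewrite metric_refl; apply Hr.
Qed.

Lemma compact_countable_base (z0 : X) :
  is_compact d ->
  exists B : nat -> X -> Prop, (forall m, is_open d (B m)) /\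
    forall z e, 0 < e -> exists m, B m z /\ forall y, B m y -> d z y < e.
Proof.
  intro Hc.
  assert (Hnet : forall k : nat, exists L : list X,
             forall y, exists x, In x L /\ d x y < / INR (S k)).
  { intro k; apply compact_finite_net; [exact Hc|].
    intros _; apply Rinv_0_lt_compat, lt_0_INR; lia. }
  apply functional_choice in Hnet as [net Hnet].
  exists (fun m y => let (k, i) := Cantor.of_nat m in d (nth i (net k) z0) y < / INR (S k)).
  split.
  - intro m; destruct (Cantor.of_nat m) as [k i]; apply is_open_ball.
  - intros z e He. destruct (archimed_cor1 (e / 2)) as [N [HN HN0]]; [lra|].
    replace N with (S (pred N)) in HN by lia.
    destruct (Hnet (pred N) z) as [c [Hc_in Hcz]].
    destruct (In_nth (net (pred N)) c z0 Hc_in) as [i [_ Hi]].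
    exists (Cantor.to_nat (pred N, i)); rewrite Cantor.cancel_of_to, Hi.
    split; [exact Hcz|]. intros y Hy.
    pose proof (metric_triangle z c y); rewrite (metric_sym z c) in *; lra.
Qed.

End Metric.

(* [orbit_map F Finv a b] is F^(b-a); it lets the two-sided orbit be indexed by
   natural numbers. *)
Definition orbit_map {X : Type} (F Finv : X -> X) (a b : nat) (x : X) : X :=
  Nat.iter a Finv (Nat.iter b F x).

Definition orbit_meets {X : Type} (F Finv : X -> X) (B : X -> Prop) (x : X) : Prop :=
  exists a b, B (orbit_map F Finv a b x).

Lemma orbit_map_semiconj {X Y : Type} (F Finv : X -> X) (T Tinv : Y -> Y) (pi : X -> Y) :
  (forall x, pi (F x) = T (pi x)) -> (forall x, pi (Finv x) = Tinv (pi x)) ->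
  forall a b x, pi (orbit_map F Finv a b x) = orbit_map T Tinv a b (pi x).
Proof.
  intros HF HFinv a b x; unfold orbit_map.
  rewrite (iter_semiconj _ _ _ HFinv), (iter_semiconj _ _ _ HF); reflexivity.
Qed.

Section Orbits.
Context {X : Type} (d : X -> X -> R) (F Finv : X -> X).
Hypothesis HF : is_continuous d F.
Hypothesis HFinv : is_continuous d Finv.
Hypothesis HFK : forall x, Finv (F x) = x.
Hypothesis HFK' : forall x, F (Finv x) = x.

Lemma continuous_orbit_map a b : is_continuous d (orbit_map F Finv a b).
Proof.
  unfold orbit_map; apply continuous_comp; apply continuous_iter; assumption.
Qed.

Lemma orbit_map_iter_comm a b n x :
  orbit_map F Finv a b (Nat.iter n F x) = Nat.iter n F (orbit_map F Finv a b x).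
Proof.
  apply iter_semiconj; intro y; unfold orbit_map.
  rewrite (iter_semiconj Finv Finv F) by (intro; rewrite HFK, HFK'; reflexivity).
  rewrite <- Nat.iter_succ_r; reflexivity.
Qed.

Lemma is_open_orbit_meets B : is_open d B -> is_open d (orbit_meets F Finv B).
Proof.
  intros HB x [a [b Hab]].
  destruct (is_open_preimage d _ B (continuous_orbit_map a b) HB x Hab) as [e [He Hball]].
  exists e; split; [exact He|]. intros y Hy; exists a, b; exact (Hball y Hy).
Qed.

Lemma orbit_meets_invariant B : is_invariant F (orbit_meets F Finv B).
Proof.
  intro x; split; intros [a [b Hab]].
  - exists (S a), b. unfold orbit_map in *.
    rewrite Nat.iter_succ_r, <- (Nat.iter_succ_r b _ F x); simpl.
    rewrite HFK; exact Hab.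
  - exists a, (S b). unfold orbit_map in *; rewrite Nat.iter_succ_r; exact Hab.
Qed.

Lemma invariant_inverse K : is_invariant F K -> is_invariant Finv K.
Proof. intros HK x; rewrite (HK (Finv x)), HFK'; tauto. Qed.

Lemma invariant_orbit_map K a b x :
  is_invariant F K -> K x -> K (orbit_map F Finv a b x).
Proof.
  intros HK Kx; unfold orbit_map.
  assert (Hiter : forall f, is_invariant f K -> forall n y, K y -> K (Nat.iter n f y)).
  { intros f Hf n; induction n as [|n IH]; intros y Ky; [exact Ky|]. exact (proj1 (Hf _) (IH y Ky)). }
  apply Hiter; [apply invariant_inverse, HK|]. apply Hiter; [exact HK | exact Kx].
Qed.

End Orbits.

Definition nonempty_closed_invariant {X : Type} (d : X -> X -> R) (F : X -> X)
  (K : X -> Prop) : Prop :=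
  is_closed d K /\ is_invariant F K /\ exists z, K z.

Definition minimal_set {X : Type} (d : X -> X -> R) (F : X -> X) (K : X -> Prop) : Prop :=
  nonempty_closed_invariant d F K /\
  forall A, nonempty_closed_invariant d F A -> (forall z, A z -> K z) -> forall z, K z -> A z.

Section MinimalSets.
Context {X : Type} (d : X -> X -> R) (F Finv : X -> X).
Hypothesis HF : is_continuous d F.
Hypothesis HFinv : is_continuous d Finv.
Hypothesis HFK : forall x, Finv (F x) = x.

Lemma minimal_set_orbit_meets K B :
  minimal_set d F K -> is_open d B -> (exists z, K z /\ B z) ->
  forall p, K p -> orbit_meets F Finv B p.
Proof.
  intros [(HKc & HKi & _) HKmin] HB [z [Kz Bz]] p Kp. apply NNPP; intro Hp.
  assert (Hz : K z /\ ~ orbit_meets F Finv B z).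
  { apply (HKmin (fun q => K q /\ ~ orbit_meets F Finv B q)); [| tauto | exact Kz].
    split; [|split].
    - apply is_closed_and; [exact HKc|]. apply is_closed_compl, is_open_orbit_meets; assumption.
    - intro q; rewrite (HKi q), (orbit_meets_invariant F Finv HFK B q); tauto.
    - exists p; tauto. }
  apply (proj2 Hz); exists 0%nat, 0%nat; exact Bz.
Qed.

Lemma minimal_orbit_meets U :
  is_minimal d F -> is_open d U -> (exists u, U u) -> forall x, orbit_meets F Finv U x.
Proof.
  intros Hmin HU [u Hu] x. apply (minimal_set_orbit_meets (fun _ => True)); try easy.
  - split; [split; [|split] |].
    + intros y Hy; contradiction (Hy I).
    + intro y; tauto.
    + exists u; exact I.
    + intros A (HAc & HAi & HAne) _ z _; exact (Hmin A HAc HAi HAne z).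
  - exists u; tauto.
Qed.

Lemma minimal_factor_meets {P : Type} (G Ginv : P -> P) (pi : P -> X) (K : P -> Prop) U :
  is_minimal d F ->
  (forall p, pi (G p) = F (pi p)) -> (forall p, pi (Ginv p) = Finv (pi p)) ->
  (forall p, G (Ginv p) = p) -> is_invariant G K -> (exists p, K p) ->
  is_open d U -> (exists u, U u) -> exists p, K p /\ U (pi p).
Proof.
  intros Hmin HG HGinv HGK HKi [p Kp] HU HUne.
  destruct (minimal_orbit_meets U Hmin HU HUne (pi p)) as [a [b Hab]].
  exists (orbit_map G Ginv a b p); split.
  - apply invariant_orbit_map; assumption.
  - rewrite (orbit_map_semiconj _ _ _ _ _ HG HGinv); exact Hab.
Qed.

End MinimalSets.

Section MinimalSetExistence.
Context {X : Type} (d : X -> X -> R) (F Finv : X -> X).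
Hypothesis Hc : is_compact d.
Hypothesis HF : is_continuous d F.
Hypothesis HFinv : is_continuous d Finv.
Hypothesis HFK : forall x, Finv (F x) = x.
Hypothesis HFK' : forall x, F (Finv x) = x.

Definition trim_step (B K : X -> Prop) (z : X) : Prop :=
  K z /\ (~ B z \/ forall w, K w -> B w).

Lemma trim_step_nonempty_closed_invariant B K :
  is_open d B -> is_invariant F B -> nonempty_closed_invariant d F K ->
  nonempty_closed_invariant d F (trim_step B K).
Proof.
  intros HB HBi (HKc & HKi & z & Kz). unfold nonempty_closed_invariant, trim_step.
  split; [|split].
  - destruct (classic (forall w, K w -> B w)) as [Hall|Hnot].
    + apply (is_closed_ext d K); [tauto | exact HKc].
    + apply (is_closed_ext d (fun x => K x /\ ~ B x)); [tauto|].
      apply is_closed_and, is_closed_compl; assumption.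
  - intro x; rewrite (HKi x), (HBi x); tauto.
  - destruct (classic (forall w, K w -> B w)) as [Hall|Hnot]; [exists z; tauto|].
    apply not_all_ex_not in Hnot as [w Hw]; exists w; tauto.
Qed.

Fixpoint trim (B : nat -> X -> Prop) (m : nat) : X -> Prop :=
  match m with
  | 0 => fun _ => True
  | S m => trim_step (orbit_meets F Finv (B m)) (trim B m)
  end.

Lemma trim_nonempty_closed_invariant B (z0 : X) :
  (forall m, is_open d (B m)) -> forall m, nonempty_closed_invariant d F (trim B m).
Proof.
  intros HB m; induction m as [|m IH]; simpl.
  - split; [|split]; [intros x Hx; contradiction (Hx I) | intro; tauto | exists z0; exact I].
  - apply trim_step_nonempty_closed_invariant; [| apply orbit_meets_invariant | exact IH]; auto.
    apply is_open_orbit_meets; auto.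
Qed.

Lemma trim_antitone B m m' z : (m <= m')%nat -> trim B m' z -> trim B m z.
Proof.
  induction 1 as [|m' _ IH]; [tauto|]. intros [Hz _]; exact (IH Hz).
Qed.

Lemma trim_limit_minimal_set B (z0 : X) :
  (forall m, is_open d (B m)) ->
  (forall z e, 0 < e -> exists m, B m z /\ forall y, B m y -> d z y < e) ->
  minimal_set d F (fun z => forall m, trim B m z).
Proof.
  intros HB Hbase. pose proof (trim_nonempty_closed_invariant B z0 HB) as Htrim.
  split; [split; [|split] |].
  - intros z Hz. apply not_all_ex_not in Hz as [m Hm].
    destruct (proj1 (Htrim m) z Hm) as [e [He Hball]].
    exists e; split; [exact He|]. intros y Hy Hall; exact (Hball y Hy (Hall m)).
  - intro z; split; intros Hz m;
      [apply (proj1 (proj1 (proj2 (Htrim m)) z)) | apply (proj2 (proj1 (proj2 (Htrim m)) z))]; apply Hz.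
  - apply (compact_nested_inter d); [exact Hc | | | ]; intros.
    + apply Htrim.
    + eapply trim_antitone; eassumption.
    + apply Htrim.
  - (* A ball around a point outside A misses the invariant set A, so step [S m]
       really removed the orbit of that ball. *)
    intros A (HAc & HAi & a & Aa) HAK z Kz. apply NNPP; intro nAz.
    destruct (HAc z nAz) as [e [He Hball]]. destruct (Hbase z e He) as [m [Bz HBm]].
    assert (Ha : ~ orbit_meets F Finv (B m) a).
    { intros [i [j Hij]]. apply (Hball _ (HBm _ Hij)), invariant_orbit_map; assumption. }
    destruct (Kz (S m)) as [_ [Hout | Hall]].
    + apply Hout; exists 0%nat, 0%nat; exact Bz.
    + exact (Ha (Hall a (HAK a Aa m))).
Qed.

End MinimalSetExistence.

Theorem exists_minimal_set {X : Type} (d : X -> X -> R) (F : X -> X) (z0 : X) :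
  is_system d F -> exists K, minimal_set d F K.
Proof.
  intros (Hd & Hc & HF & Finv & HFinv & HFK & HFK').
  destruct (compact_countable_base d Hd z0 Hc) as [B [HB Hbase]].
  eexists; exact (trim_limit_minimal_set d F Finv Hc HF HFinv HFK HFK' B z0 HB Hbase).
Qed.

Definition subspace_metric {X : Type} (d : X -> X -> R) (K : X -> Prop)
  (p q : {z | K z}) : R :=
  d (proj1_sig p) (proj1_sig q).

Definition restrict {X : Type} (F : X -> X) (K : X -> Prop) (HK : is_invariant F K)
  (p : {z | K z}) : {z | K z} :=
  exist K (F (proj1_sig p)) (proj1 (HK _) (proj2_sig p)).

Lemma restrict_iter {X : Type} (F : X -> X) (K : X -> Prop) (HK : is_invariant F K) n p :
  proj1_sig (Nat.iter n (restrict F K HK) p) = Nat.iter n F (proj1_sig p).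
Proof. apply iter_semiconj; reflexivity. Qed.

Section Subspace.
Context {X : Type} (d : X -> X -> R) (K : X -> Prop).

Lemma subspace_is_metric : is_metric d -> is_metric (subspace_metric d K).
Proof.
  intro Hd; unfold subspace_metric; split; [|split; [|split]]; intros.
  - apply metric_nonneg, Hd.
  - destruct x, y; simpl. split.
    + intro H; apply subset_eq_compat, Hd, H.
    + intro H; inversion H; apply metric_refl, Hd.
  - apply metric_sym, Hd.
  - apply metric_triangle, Hd.
Qed.

Lemma is_open_subspace B : is_open d B -> is_open (subspace_metric d K) (fun p => B (proj1_sig p)).
Proof.
  intros HB p Bp. destruct (HB _ Bp) as [e [He Hball]].
  exists e; split; [exact He|]. intros q Hq; exact (Hball _ Hq).
Qed.

Lemma subspace_compact :
  is_metric d -> is_compact d -> is_closed d K -> is_compact (subspace_metric d K).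
Proof.
  intros Hd Hc HKc I C HCo Hcov.
  set (D := fun (o : option I) (x : X) => match o with
    | Some i => exists e, 0 < e /\ forall r : {z | K z}, d x (proj1_sig r) < e -> C i r
    | None => ~ K x
    end).
  destruct (Hc (option I) D) as [L HL].
  - intros [i|]; [|exact HKc]. intros x [e [He Hball]].
    exists (e / 2); split; [lra|]. intros y Hy; exists (e / 2); split; [lra|].
    intros r Hr; apply Hball. pose proof (metric_triangle d Hd x y (proj1_sig r)); lra.
  - intro x. destruct (classic (K x)) as [h|h]; [|exists None; exact h].
    destruct (Hcov (exist K x h)) as [i Hi]. destruct (HCo i _ Hi) as [e [He Hball]].
    exists (Some i), e; split; [exact He|]. intro r; exact (Hball r).
  - exists (flat_map (fun o => match o with Some i => i :: nil | None => nil end) L).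
    intros [x h]. destruct (HL x) as [[i|] [Hin HD]]; [|contradiction (HD h)].
    exists i; split.
    + apply in_flat_map; exists (Some i); split; [exact Hin | left; reflexivity].
    + destruct HD as [e [He Hball]]. apply Hball; simpl; rewrite metric_refl; assumption.
Qed.

Lemma restrict_continuous F (HK : is_invariant F K) :
  is_continuous d F -> is_continuous (subspace_metric d K) (restrict F K HK).
Proof.
  intros HF p e He. destruct (HF (proj1_sig p) e He) as [delta [Hdelta Hcont]].
  exists delta; split; [exact Hdelta|]. intros q Hq; exact (Hcont _ Hq).
Qed.

Lemma restrict_system F (HK : is_invariant F K) :
  is_system d F -> is_closed d K -> is_system (subspace_metric d K) (restrict F K HK).
Proof.
  intros (Hd & Hc & HF & Finv & HFinv & HFK & HFK') HKc.
  split; [apply subspace_is_metric, Hd|]. split; [apply subspace_compact; assumption|].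
  split; [apply restrict_continuous, HF|].
  exists (restrict Finv K (invariant_inverse F Finv HFK' K HK)).
  split; [apply restrict_continuous, HFinv|].
  split; intros [x h]; apply subset_eq_compat; simpl; [apply HFK | apply HFK'].
Qed.

Lemma restrict_minimal F (HK : is_invariant F K) :
  minimal_set d F K -> is_minimal (subspace_metric d K) (restrict F K HK).
Proof.
  intros [(HKc & _ & _) HKmin] A HAc HAi [p0 Ap0] [z h].
  assert (HA_irr : forall z (h h' : K z), A (exist K z h) -> A (exist K z h')).
  { intros y hy hy'; rewrite (proof_irrelevance _ hy hy'); trivial. }
  set (A' := fun z => exists h : K z, A (exist K z h)).
  assert (HA' : forall z, K z -> A' z).
  { apply HKmin; [split; [|split] | intros y [hy _]; exact hy].
    - intros y nAy. destruct (classic (K y)) as [hy|hy].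
      + assert (nAy' : ~ A (exist K y hy)) by (intro; apply nAy; exists hy; assumption).
        destruct (HAc _ nAy') as [e [He Hball]].
        exists e; split; [exact He|]. intros y' Hy' [hy' Ay']; exact (Hball (exist K y' hy') Hy' Ay').
      + destruct (HKc y hy) as [e [He Hball]].
        exists e; split; [exact He|]. intros y' Hy' [hy' _]; exact (Hball y' Hy' hy').
    - intro y; split; intros [hy Ay].
      + exists (proj1 (HK y) hy); exact (proj1 (HAi _) Ay).
      + exists (proj2 (HK y) hy). apply (proj2 (HAi _)), (HA_irr _ hy), Ay.
    - destruct p0 as [y hy]; exists y, hy; exact Ap0. }
  destruct (HA' z h) as [h' Ah']; exact (HA_irr z h' h Ah').
Qed.

End Subspace.

Lemma recurrence_set_minimal_set l Rs {X : Type} (d : X -> X -> R) F (M B : X -> Prop) :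
  recurrence_set l Rs -> is_system d F -> minimal_set d F M ->
  is_open d B -> (exists p, M p /\ B p) ->
  exists n, (0 < n)%nat /\ Rs n /\
    exists p, M p /\ forall j, (j <= l)%nat -> B (Nat.iter (j * n) F p).
Proof.
  intros HR Hsys HM HB [p [Mp Bp]]. pose proof HM as [(HMc & HMi & _) _].
  destruct (HR _ _ _ (restrict_system d M F HMi Hsys HMc) (restrict_minimal d M F HMi HM)
              (fun q => B (proj1_sig q))) as [n [Hn [HRn [q Hq]]]].
  - apply is_open_subspace, HB.
  - exists (exist M p Mp); exact Bp.
  - exists n; split; [exact Hn|]; split; [exact HRn|].
    exists (proj1_sig q); split; [exact (proj2_sig q)|].
    intros j Hj; rewrite <- (restrict_iter F M HMi); exact (Hq j Hj).
Qed.

Definition dprod {X Y : Type} (dX : X -> X -> R) (dY : Y -> Y -> R) (p q : X * Y) : R :=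
  dX (fst p) (fst q) + dY (snd p) (snd q).

Definition fprod {X Y : Type} (f : X -> X) (g : Y -> Y) (p : X * Y) : X * Y :=
  (f (fst p), g (snd p)).

Lemma fprod_inverse {X Y : Type} (T Tinv : X -> X) (S Sinv : Y -> Y) :
  (forall x, Tinv (T x) = x) -> (forall y, Sinv (S y) = y) ->
  forall p, fprod Tinv Sinv (fprod T S p) = p.
Proof. intros HTK HSK [x y]; unfold fprod; simpl; rewrite HTK, HSK; reflexivity. Qed.

Section Product.
Context {X Y : Type} (dX : X -> X -> R) (dY : Y -> Y -> R).
Hypothesis HdX : is_metric dX.
Hypothesis HdY : is_metric dY.

Lemma dprod_metric : is_metric (dprod dX dY).
Proof.
  unfold dprod; split; [|split; [|split]].
  - intros p q; pose proof (metric_nonneg dX HdX (fst p) (fst q));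
      pose proof (metric_nonneg dY HdY (snd p) (snd q)); lra.
  - intros [x y] [x' y']; simpl; split.
    + intro H. pose proof (metric_nonneg dX HdX x x'); pose proof (metric_nonneg dY HdY y y').
      assert (Hx : dX x x' = 0) by lra. assert (Hy : dY y y' = 0) by lra.
      apply HdX in Hx; apply HdY in Hy; subst; reflexivity.
    + intro H; inversion H; rewrite (metric_refl dX HdX), (metric_refl dY HdY); lra.
  - intros; rewrite (metric_sym dX HdX), (metric_sym dY HdY); reflexivity.
  - intros p q r; pose proof (metric_triangle dX HdX (fst p) (fst q) (fst r));
      pose proof (metric_triangle dY HdY (snd p) (snd q) (snd r)); lra.
Qed.

Lemma is_open_fst U : is_open dX U -> is_open (dprod dX dY) (fun p => U (fst p)).
Proof.
  intros HU p Up. destruct (HU _ Up) as [e [He Hball]].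
  exists e; split; [exact He|]. intros q Hq; apply Hball.
  unfold dprod in Hq; pose proof (metric_nonneg dY HdY (snd p) (snd q)); lra.
Qed.

Lemma is_open_snd V : is_open dY V -> is_open (dprod dX dY) (fun p => V (snd p)).
Proof.
  intros HV p Vp. destruct (HV _ Vp) as [e [He Hball]].
  exists e; split; [exact He|]. intros q Hq; apply Hball.
  unfold dprod in Hq; pose proof (metric_nonneg dX HdX (fst p) (fst q)); lra.
Qed.

Lemma fprod_continuous f g :
  is_continuous dX f -> is_continuous dY g -> is_continuous (dprod dX dY) (fprod f g).
Proof.
  intros Hf Hg p e He; unfold dprod, fprod; simpl.
  destruct (Hf (fst p) (e / 2)) as [d1 [Hd1 Hf1]]; [lra|].
  destruct (Hg (snd p) (e / 2)) as [d2 [Hd2 Hg2]]; [lra|].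
  exists (Rmin d1 d2); split; [now apply Rmin_pos|]. intros q Hq.
  pose proof (metric_nonneg dX HdX (fst p) (fst q)); pose proof (metric_nonneg dY HdY (snd p) (snd q)).
  pose proof (Rmin_l d1 d2); pose proof (Rmin_r d1 d2).
  assert (dX (f (fst p)) (f (fst q)) < e / 2) by (apply Hf1; lra).
  assert (dY (g (snd p)) (g (snd q)) < e / 2) by (apply Hg2; lra).
  lra.
Qed.

(* The tube lemma, with every open cover refined to boxes. *)
Lemma dprod_compact : is_compact dX -> is_compact dY -> is_compact (dprod dX dY).
Proof.
  intros HcX HcY I C HCo Hcov.
  assert (Hbox : forall p : X * Y, exists ir : I * R, 0 < snd ir /\ forall q,
             dX (fst p) (fst q) < snd ir -> dY (snd p) (snd q) < snd ir -> C (fst ir) q).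
  { intro p. destruct (Hcov p) as [i Hi]. destruct (HCo i p Hi) as [e [He Hball]].
    exists (i, e / 2); split; [simpl; lra|]. intros q H1 H2; apply Hball.
    unfold dprod; simpl in *; lra. }
  apply functional_choice in Hbox as [box Hbox].
  assert (Hfibre : forall x, exists Lr : list Y * R, 0 < snd Lr /\ forall y', exists y,
             In y (fst Lr) /\ dY y y' < snd (box (x, y)) /\ snd Lr <= snd (box (x, y))).
  { intro x.
    destruct (compact_finite_net dY HdY (fun y => snd (box (x, y))) HcY) as [L HL];
      [intro y; apply (Hbox (x, y))|].
    destruct (list_min_pos (fun y => snd (box (x, y))) L) as [delta [Hdelta Hmin]];
      [intro y; apply (Hbox (x, y))|].
    exists (L, delta); split; [exact Hdelta|]. intro y'.
    destruct (HL y') as [y [Hy Hyy]]; exists y; auto. }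
  apply functional_choice in Hfibre as [fibre Hfibre].
  destruct (compact_finite_net dX HdX (fun x => snd (fibre x)) HcX) as [LX HLX];
    [intro x; apply Hfibre|].
  exists (flat_map (fun x => map (fun y => fst (box (x, y))) (fst (fibre x))) LX).
  intros [x' y']. destruct (HLX x') as [x [Hx Hxx]].
  destruct (proj2 (Hfibre x) y') as [y [Hy [Hyy Hle]]].
  exists (fst (box (x, y))); split.
  - apply in_flat_map; exists x; split; [exact Hx|]. exact (in_map (fun y => fst (box (x, y))) _ y Hy).
  - apply (proj2 (Hbox (x, y))); simpl; lra.
Qed.

End Product.

Lemma fprod_system {X Y : Type} (dX : X -> X -> R) (dY : Y -> Y -> R) T S :
  is_system dX T -> is_system dY S -> is_system (dprod dX dY) (fprod T S).
Proof.
  intros (HdX & HcX & HT & Tinv & HTinv & HTK & HTK') (HdY & HcY & HS & Sinv & HSinv & HSK & HSK').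
  split; [apply dprod_metric; assumption|]. split; [apply dprod_compact; assumption|].
  split; [apply fprod_continuous; assumption|].
  exists (fprod Tinv Sinv); split; [apply fprod_continuous; assumption|].
  split; apply fprod_inverse; assumption.
Qed.

Section MinimalProduct.
Context {X Y : Type} (dX : X -> X -> R) (dY : Y -> Y -> R) (T Tinv : X -> X) (S Sinv : Y -> Y).
Hypothesis HdX : is_metric dX.
Hypothesis HdY : is_metric dY.
Hypothesis HcX : is_compact dX.
Hypothesis HcY : is_compact dY.
Hypothesis HT : is_continuous dX T.
Hypothesis HTinv : is_continuous dX Tinv.
Hypothesis HS : is_continuous dY S.
Hypothesis HSinv : is_continuous dY Sinv.
Hypothesis HTK : forall x, Tinv (T x) = x.
Hypothesis HTK' : forall x, T (Tinv x) = x.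
Hypothesis HSK : forall y, Sinv (S y) = y.
Hypothesis HSK' : forall y, S (Sinv y) = y.
Hypothesis HminX : is_minimal dX T.
Hypothesis HminY : is_minimal dY S.

Lemma minimal_set_prod_meets M U V :
  minimal_set (dprod dX dY) (fprod T S) M ->
  is_open dX U -> (exists u, U u) -> is_open dY V -> (exists v, V v) ->
  exists p, M p /\ U (fst p) /\ orbit_meets (fprod T S) (fprod Tinv Sinv) (fun q => V (snd q)) p.
Proof.
  intros HM HU HUne HV HVne. pose proof HM as [(_ & HMi & HMne) _].
  pose proof (fprod_inverse Tinv T Sinv S HTK' HSK') as HFK'.
  destruct (minimal_factor_meets dX T Tinv HT HTinv HTK (fprod T S) (fprod Tinv Sinv) fst M U
              HminX (fun _ => eq_refl) (fun _ => eq_refl) HFK' HMi HMne HU HUne) as [p [Mp Up]].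
  destruct (minimal_factor_meets dY S Sinv HS HSinv HSK (fprod T S) (fprod Tinv Sinv) snd M V
              HminY (fun _ => eq_refl) (fun _ => eq_refl) HFK' HMi HMne HV HVne) as [q [Mq Vq]].
  exists p; split; [exact Mp|]; split; [exact Up|].
  apply (minimal_set_orbit_meets (dprod dX dY) (fprod T S) (fprod Tinv Sinv)
           (fprod_continuous dX dY HdX HdY T S HT HS)
           (fprod_continuous dX dY HdX HdY Tinv Sinv HTinv HSinv)
           (fprod_inverse T Tinv S Sinv HTK HSK) M);
    [exact HM | apply is_open_snd; assumption | exists q; split; assumption | exact Mp].
Qed.

Lemma recurrence_set_meets_return_set l Rs U V :
  recurrence_set l Rs -> is_open dX U -> (exists u, U u) -> is_open dY V -> (exists v, V v) ->
  exists n, (0 < n)%nat /\ (Rs n /\ return_set T l U n) /\ multiple_return S l n V.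
Proof.
  intros HR HU [u Hu] HV [v Hv].
  assert (HP : is_system (dprod dX dY) (fprod T S)).
  { apply fprod_system; do 3 (split; [assumption|]); [exists Tinv | exists Sinv]; auto. }
  destruct (exists_minimal_set _ _ (u, v) HP) as [M HM].
  destruct (minimal_set_prod_meets M U V HM HU (ex_intro _ u Hu) HV (ex_intro _ v Hv))
    as (p0 & Mp0 & Up0 & a & b & Vp0).
  set (G := orbit_map (fprod T S) (fprod Tinv Sinv) a b).
  destruct (recurrence_set_minimal_set l Rs (dprod dX dY) (fprod T S) M
              (fun p => U (fst p) /\ V (snd (G p))) HR HP HM) as [n [Hn [HRn [p [_ Hp]]]]].
  - apply is_open_and; [apply is_open_fst; assumption|].
    apply (is_open_preimage _ G (fun q => V (snd q))); [|apply is_open_snd; assumption].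
    apply continuous_orbit_map; apply fprod_continuous; assumption.
  - exists p0; auto.
  - exists n; split; [exact Hn|]; split; [split; [exact HRn|] |].
    + exists (fst p); intros j Hj.
      rewrite <- (iter_semiconj (fprod T S) T fst (fun _ => eq_refl)); apply (Hp j Hj).
    + exists (snd (G p)); intros j Hj.
      rewrite <- (iter_semiconj (fprod T S) S snd (fun _ => eq_refl)); unfold G.
      rewrite <- orbit_map_iter_comm; [apply (Hp j Hj) | apply fprod_inverse ..]; assumption.
Qed.

End MinimalProduct.

Theorem mainTheorem15 (l : nat) (Rs : nat -> Prop)
  (X : Type) (d : X -> X -> R) (T : X -> X) (U : X -> Prop) :
  (1 <= l)%nat ->
  recurrence_set l Rs ->
  is_system d T -> is_minimal d T ->
  is_open d U -> (exists x, U x) ->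
  recurrence_set l (fun n => Rs n /\ return_set T l U n).
Proof.
  intros _ HR (HdX & HcX & HT & Tinv & HTinv & HTK & HTK') HminX HU HUne
    Y dY S (HdY & HcY & HS & Sinv & HSinv & HSK & HSK') HminY V HV HVne.
  exact (recurrence_set_meets_return_set d dY T Tinv S Sinv HdX HdY HcX HcY HT HTinv HS HSinv
           HTK HTK' HSK HSK' HminX HminY l Rs U V HR HU HUne HV HVne).
Qed.
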